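(* Let $m\geq 3$ and let $R(m,3)$ be the rectangular supergrid graph induced by $\{(x,y):1\leq x\leq m,\ 1\leq y\leq 3\}$. Let $z_1=(m,1)$, $z_2=(m,2)$, $z_3=(m,3)$, $e_{12}=(z_1,z_2)$ and $e_{23}=(z_2,z_3)$. If $s$ and $t$ are two distinct vertices of $R(m,3)$ with $\{s,t\}\cap\{z_1,z_2,z_3\}=\emptyset$, then there exists a Hamiltonian path of $R(m,3)$ from $s$ to $t$ that contains both edges $e_{12}$ and $e_{23}$.
   Context: The supergrid graph $S^\infty$ has vertex set $\mathbb{Z}^2$, two distinct vertices $u,v$ being adjacent iff $|u_x-v_x|\leq 1$ and $|u_y-v_y|\leq 1$; a supergrid graph is a finite vertex-induced subgraph of $S^\infty$. A Hamiltonian path from $s$ to $t$ is a simple path from $s$ to $t$ visiting every vertex exactly once. *)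

From mathcomp Require Import all_boot.
Set Implicit Arguments. Unset Strict Implicit. Unset Printing Implicit Defensive.

(* Vertices of the infinite supergrid S^infty are points of Z^2; the
   rectangular supergrid graph R(m,n) lives in the positive quadrant, so we
   use nat * nat coordinates (coordinates 1..m, 1..n). *)
Definition vtx := (nat * nat)%type.

(* adjacency in S^infty: distinct and |u_x-v_x|<=1, |u_y-v_y|<=1
   (written with truncated nat subtraction in both directions) *)
Definition sg_adj (u v : vtx) : bool :=
  (u != v) && (u.1 - v.1 <= 1) && (v.1 - u.1 <= 1) && (u.2 - v.2 <= 1) && (v.2 - u.2 <= 1).

Definition in_rect (m n : nat) (v : vtx) : bool :=
  (1 <= v.1 <= m) && (1 <= v.2 <= n).

Definition ham_path (V : pred vtx) (s t : vtx) (p : seq vtx) : Prop :=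
  exists q : seq vtx, p = s :: q /\
  [/\ uniq p, all V p, (forall v, V v -> v \in p),
      path sg_adj s q & last s q = t].

Definition path_has_edge (p : seq vtx) (u v : vtx) : Prop :=
  exists i, i.+1 < size p /\
    ((nth u p i = u /\ nth u p i.+1 = v) \/ (nth u p i = v /\ nth u p i.+1 = u)).

From mathcomp Require Import all_boot zify.
Set Implicit Arguments. Unset Strict Implicit. Unset Printing Implicit Defensive.

(* We prove by induction on m a stronger statement: for s, t outside the last
   column there is a Hamiltonian s-t path of R(m,3) which traverses the last
   column straight, as (m,1),(m,2),(m,3) or in reverse, and which, when neither
   s nor t lies in the first column, also uses a vertical edge of the first
   column.  A vertical edge (x,y)(x,y') of a path can be replaced by a detour
   through an unvisited adjacent column x', traversed from row 1 to row 3 if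
   y < y' and from row 3 to row 1 otherwise.  Applied to the last column this
   extends a path of R(m-1,3) to the right; applied to the first column of a
   path of R(m-1,3) shifted by one column it extends it to the left.  The
   remaining case, s in the first two columns and t in column m-1, concatenates
   a Hamiltonian path of the first two columns ending next to (3,2) with a
   shifted path of R(m-2,3) starting at (1,2).  The cases m = 3, 4 and the
   paths of the first two columns are found by a depth-first search whose
   results are checked by computation. *)

Section InfixInsert.
Variable T : eqType.
Implicit Types (w l r ins : seq T) (u v : T).

Lemma infix_map (U : eqType) (f : T -> U) w p : infix w p -> infix (map f w) (map f p).
Proof. by case/infixP=> a [b ->]; rewrite !map_cat infix_infix. Qed.

Lemma infix_inserted l u ins v r : infix ins (l ++ u :: ins ++ v :: r).
Proof. by rewrite -cat1s catA infix_infix. Qed.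

Lemma prefix_insert w l u v r ins : u \notin w ->
  prefix w (l ++ u :: v :: r) -> prefix w (l ++ u :: ins ++ v :: r).
Proof.
elim: l w => [|a l IH] [|b w] //= uw /andP [ba].
  by case: w uw => [|c w] //=; rewrite inE -(eqP ba) eqxx.
by rewrite ba; apply: IH; apply: contra uw; rewrite inE orbC => ->.
Qed.

Lemma infix_insert w l u v r ins : u \notin w ->
  infix w (l ++ u :: v :: r) -> infix w (l ++ u :: ins ++ v :: r).
Proof.
move=> uw; elim: l => [|a l IH] /=; case/orP.
- by move/(prefix_insert (l := [::]) ins uw) => /= ->.
- by move=> wvr; rewrite infix_catl ?orbT.
- by move/(prefix_insert (l := a :: l) ins uw) => /= ->.
- by move/IH => ->; rewrite orbT.
Qed.

End InfixInsert.

Lemma sg_adj_sym : symmetric sg_adj.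
Proof. by move=> u v; rewrite /sg_adj eq_sym; case: (v != u) => //=; lia. Qed.

Definition strip (lo hi : nat) (v : vtx) : bool := (lo <= v.1 <= hi) && (1 <= v.2 <= 3).

Definition hamseq (V : pred vtx) (p : seq vtx) : Prop := [/\ uniq p, sorted sg_adj p & V =i p].

Definition ends (s t : vtx) (p : seq vtx) : Prop := exists2 q, p = s :: q & last s q = t.

Lemma hamseq_perm U V W p1 p2 p :
  (forall v, U v = V v || W v) -> (forall v, V v -> ~~ W v) ->
  hamseq V p1 -> hamseq W p2 -> perm_eq p (p1 ++ p2) -> sorted sg_adj p -> hamseq U p.
Proof.
move=> UVW dVW [u1 _ c1] [u2 _ c2] pp sp; split=> // [|v].
- rewrite (perm_uniq pp) cat_uniq u1 u2 andbT; apply/hasPn => v.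
  rewrite -c1 -c2 !unfold_in; exact: contraTN (dVW v).
- by rewrite (perm_mem pp) mem_cat -c1 -c2 !unfold_in UVW.
Qed.

Lemma ends_cat s e e' t p1 p2 : ends s e p1 -> ends e' t p2 -> ends s t (p1 ++ p2).
Proof. by case=> q1 -> _ [q2 -> <-]; exists (q1 ++ e' :: q2); rewrite ?last_cat. Qed.

Lemma hamseq_cat U V W s e e' t p1 p2 :
  (forall v, U v = V v || W v) -> (forall v, V v -> ~~ W v) ->
  hamseq V p1 -> ends s e p1 -> hamseq W p2 -> ends e' t p2 -> sg_adj e e' ->
  hamseq U (p1 ++ p2).
Proof.
move=> UVW dVW h1 [q1 def_p1 e_q1] h2 [q2 def_p2 _] ee'; subst p1 p2.
apply: (hamseq_perm UVW dVW h1 h2) => //.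
by case: h1 h2 => [_ /= s1 _] [_ /= s2 _]; rewrite cat_path e_q1 /= ee' s1 s2.
Qed.

Lemma ends_insert s t l x y r ins :
  ends s t (l ++ x :: y :: r) -> ends s t (l ++ x :: ins ++ y :: r).
Proof.
case: l => [|a l] [q /= [-> <-] <-].
  by exists (ins ++ y :: r); rewrite // last_cat.
by exists (l ++ x :: ins ++ y :: r); rewrite // !(last_cat, last_cons).
Qed.

Lemma hamseq_insert U V W l x y r ins :
  (forall v, U v = V v || W v) -> (forall v, V v -> ~~ W v) ->
  hamseq V (l ++ x :: y :: r) -> hamseq W ins ->
  sg_adj x (head y ins) -> sg_adj (last x ins) y ->
  hamseq U (l ++ x :: ins ++ y :: r).
Proof.
move=> UVW dVW h1 h2 x_ins ins_y; apply: (hamseq_perm UVW dVW h1 h2).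
  by rewrite perm_sym -catA perm_cat2l cat_cons perm_cons perm_catC.
move: h1 h2 => [_ s1 _] [_ s2 _].
move: s1; rewrite !sorted_cat_cons cat_path /= => /andP [-> /andP [_ ->]].
by rewrite ins_y andbT; case: ins s2 x_ins {ins_y} => //= z ins -> ->.
Qed.

Lemma hamseq_rev V p : hamseq V p -> hamseq V (rev p).
Proof.
case=> u s c; split=> [||v]; rewrite ?rev_uniq ?mem_rev //.
by rewrite rev_sorted (eq_sorted (fun u v => sg_adj_sym v u)).
Qed.

Lemma ends_rev s t p : ends s t p -> ends t s (rev p).
Proof.
case=> q -> <-; rewrite lastI rev_rcons; exists (rev (belast s q)) => //.
by case: q => [|y q] //=; rewrite rev_cons last_rcons.
Qed.

Lemma ends_map (f : vtx -> vtx) s t p : ends s t p -> ends (f s) (f t) (map f p).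
Proof. by case=> q -> <-; exists (map f q); rewrite ?last_map. Qed.

Definition shift (d : nat) (v : vtx) : vtx := (d + v.1, v.2).

Lemma sg_adj_shift d : {mono shift d : u v / sg_adj u v}.
Proof. by move=> [a b] [c e]; rewrite /sg_adj /shift /= xpair_eqE eqn_add2l !subnDl. Qed.

Lemma hamseq_shift d lo hi p :
  hamseq (strip lo hi) p -> hamseq (strip (d + lo) (d + hi)) (map (shift d) p).
Proof.
case=> u s c; split.
- by rewrite map_inj_uniq // => [[a b] [a' b']] /= [/addnI -> ->].
- by rewrite (mono_sorted (sg_adj_shift d)).
- move=> [a b]; rewrite unfold_in /strip /=; apply/idP/mapP => [h|[[a' b'] + [-> ->]]].
    exists (a - d, b); last by rewrite /shift /=; congr pair; lia.
    by rewrite -c unfold_in /strip /=; lia.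
  by rewrite -c unfold_in /strip /=; lia.
Qed.

Definition col (x : nat) : seq vtx := [:: (x, 1); (x, 2); (x, 3)].

Lemma hamseq_col x : hamseq (strip x x) (col x).
Proof.
split; first by rewrite /= !inE !xpair_eqE eqxx.
  by rewrite /= /sg_adj /= subnn !xpair_eqE eqxx.
by move=> [a b]; rewrite unfold_in /strip !inE !xpair_eqE /=; lia.
Qed.

Definition sweeps_col (x : nat) (p : seq vtx) : bool := infix (col x) p || infix (rev (col x)) p.

Definition vert_steps : seq (nat * nat) := [:: (1, 2); (2, 1); (2, 3); (3, 2)].

Definition vedge (x : nat) (p : seq vtx) : bool :=
  has (fun yy => infix [:: (x, yy.1); (x, yy.2)] p) vert_steps.

Lemma vedgeP x p : vedge x p ->
  exists y y' l r, (y, y') \in vert_steps /\ p = l ++ (x, y) :: (x, y') :: r.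
Proof. by case/hasP=> [[y y'] yy' /infixP [l [r ->]]]; exists y, y', l, r. Qed.

Lemma sweeps_col_vedge x p : sweeps_col x p -> vedge x p.
Proof.
case/orP=> sw; apply/hasP.
  by exists (2, 3); rewrite // (infix_trans _ sw) // (suffix_infix [:: (x, 1)]).
by exists (3, 2); rewrite // (infix_trans _ sw) // (prefix_infix _ [:: (x, 1)]).
Qed.

Lemma sweeps_col_shift d x p : sweeps_col x p -> sweeps_col (d + x) (map (shift d) p).
Proof. by case/orP=> /(infix_map (shift d)) sw; apply/orP; [left | right]. Qed.

Lemma vedge_shift d x p : vedge x p -> vedge (d + x) (map (shift d) p).
Proof.
by case/hasP=> yy yy_in /(infix_map (shift d)) sw; apply/hasP; exists yy.
Qed.

Lemma sweeps_col_insert x l u v r ins : u.1 != x ->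
  sweeps_col x (l ++ u :: v :: r) -> sweeps_col x (l ++ u :: ins ++ v :: r).
Proof.
move=> ux; have u_col : u \notin col x.
  by apply: contra ux; rewrite /col !inE => /or3P [] /eqP ->.
by case/orP=> sw; apply/orP; [left | right]; apply: infix_insert sw; rewrite ?mem_rev.
Qed.

Lemma vedge_insert x l u v r ins : u.1 != x ->
  vedge x (l ++ u :: v :: r) -> vedge x (l ++ u :: ins ++ v :: r).
Proof.
move=> ux /hasP [yy yy_in sw]; apply/hasP; exists yy => //.
by apply: infix_insert sw; apply: contra ux; rewrite !inE => /orP [] /eqP ->.
Qed.

Lemma sweeps_col_rev x p : sweeps_col x p -> sweeps_col x (rev p).
Proof. by rewrite /sweeps_col -!infix_revLR revK orbC. Qed.

Lemma vedge_rev x p : vedge x p -> vedge x (rev p).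
Proof.
case/hasP=> [[y y'] yy' e]; apply/hasP; exists (y', y).
  by move: yy'; rewrite !inE => /or4P [] /eqP [-> ->].
by rewrite -[[:: _; _]]/(rev [:: (x, y); (x, y')]) infix_rev.
Qed.

Definition colseq (x y y' : nat) : seq vtx := if y < y' then col x else rev (col x).

Lemma sweeps_colseq x y y' l u v r : sweeps_col x (l ++ u :: colseq x y y' ++ v :: r).
Proof. by rewrite /sweeps_col /colseq; case: ifP; rewrite infix_inserted ?orbT. Qed.

Lemma hamseq_insert_col U V x x' y y' l r :
  x' = x.+1 \/ x = x'.+1 -> (y, y') \in vert_steps ->
  (forall v, U v = V v || strip x' x' v) -> (forall v, V v -> ~~ strip x' x' v) ->
  hamseq V (l ++ (x, y) :: (x, y') :: r) ->
  hamseq U (l ++ (x, y) :: colseq x' y y' ++ (x, y') :: r).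
Proof.
move=> xx' yy' UVW dVW h; apply: (hamseq_insert UVW dVW h).
  by rewrite /colseq; case: ifP => _; [exact: hamseq_col | exact/hamseq_rev/hamseq_col].
all: move: yy'; rewrite !inE /colseq /sg_adj => /or4P [] /eqP [-> ->] /=;
  rewrite !xpair_eqE /=; lia.
Qed.

Definition sweeping_path (m : nat) (s t : vtx) (p : seq vtx) : Prop :=
  [/\ hamseq (strip 1 m) p, ends s t p, sweeps_col m p & (1 < s.1 -> 1 < t.1 -> vedge 1 p)].

Definition sweeping (m : nat) : Prop :=
  forall s t, strip 1 m.-1 s -> strip 1 m.-1 t -> s != t -> exists p, sweeping_path m s t p.

Lemma sweeping_path_rev m s t p : sweeping_path m s t p -> sweeping_path m t s (rev p).
Proof.
case=> ham st sw v1; split; [exact: hamseq_rev | exact: ends_rev | exact: sweeps_col_rev |].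
by move=> t1 s1; apply/vedge_rev/v1.
Qed.

Lemma sweeping_extend_right m s t p : 1 < m ->
  sweeping_path m s t p -> exists p', sweeping_path m.+1 s t p'.
Proof.
move=> m_gt1 [ham st sw v1].
have [y [y' [l [r [yy' def_p]]]]] := vedgeP (sweeps_col_vedge sw).
rewrite {}def_p in ham st v1.
exists (l ++ (m, y) :: colseq m.+1 y y' ++ (m, y') :: r); split.
- by apply: (hamseq_insert_col _ yy' _ _ ham) => [|v|v]; [left | rewrite /strip; lia..].
- exact: ends_insert.
- exact: sweeps_colseq.
- by move=> s1 t1; apply: vedge_insert (v1 s1 t1); rewrite /=; lia.
Qed.

Lemma sweeping_extend_left m s t p : 1 < m -> 1 < s.1 -> 1 < t.1 ->
  sweeping_path m s t p -> exists p', sweeping_path m.+1 (shift 1 s) (shift 1 t) p'.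
Proof.
move=> m_gt1 s1 t1 [ham st sw /(_ s1 t1) v1].
have [y [y' [l [r [yy' def_q]]]]] := vedgeP (vedge_shift 1 v1).
exists (l ++ (2, y) :: colseq 1 y y' ++ (2, y') :: r); split.
- move: (hamseq_shift 1 ham); rewrite def_q => hq.
  by apply: (hamseq_insert_col _ yy' _ _ hq) => [|v|v]; [right | rewrite /strip; lia..].
- by apply: ends_insert; rewrite -def_q; apply: ends_map.
- by apply: sweeps_col_insert; rewrite -?def_q ?(sweeps_col_shift 1 sw) //=; lia.
- by move=> _ _; apply/sweeps_col_vedge/sweeps_colseq.
Qed.

Section HamSearch.
Variables (T : eqType) (e : rel T) (ok : pred (seq T)).

(* [walk] is the path built so far, in reverse order; [n] is the number of
   vertices still to be added, [size rest]. *)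
Fixpoint ham_search (n : nat) (rest walk : seq T) : option (seq T) :=
  if n is n'.+1 then
    let fix first cands :=
      if cands is v :: cands' then
        if ham_search n' (rem v rest) (v :: walk) is Some p then Some p else first cands'
      else None in
    first [seq v <- rest | e (head v walk) v]
  else if ok (rev walk) then Some (rev walk) else None.

End HamSearch.

Definition strip_enum (lo hi : nat) : seq vtx :=
  [seq (x, y) | x <- iota lo (hi.+1 - lo), y <- iota 1 3].

Lemma mem_strip_enum lo hi v : (v \in strip_enum lo hi) = strip lo hi v.
Proof.
case: v => a b; rewrite /strip /=; apply/allpairsP/idP => [[[x y] /=]|h].
  by move=> -[+ + [-> ->]]; rewrite mem_iota !inE; lia.
by exists (a, b); rewrite !mem_iota /=; split=> //; lia.
Qed.

Definition find_ham (ok : pred (seq vtx)) (lo hi : nat) (s : vtx) : seq vtx :=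
  let rest := rem s (strip_enum lo hi) in
  odflt [::] (ham_search sg_adj ok (size rest) rest [:: s]).

Definition hamseqb (lo hi : nat) (p : seq vtx) : bool :=
  [&& uniq p, sorted sg_adj p & perm_eq p (strip_enum lo hi)].

Lemma hamseqbP lo hi p : hamseqb lo hi p -> hamseq (strip lo hi) p.
Proof.
by case/and3P=> u s pe; split=> // v; rewrite (perm_mem pe) mem_strip_enum unfold_in.
Qed.

Definition endsb (s t : vtx) (p : seq vtx) : bool := (p == s :: behead p) && (last s p == t).

Lemma endsbP s t p : endsb s t p -> ends s t p.
Proof. by case/andP=> /eqP -> /eqP <-; exists (behead p). Qed.

Definition sweeping_pathb (m : nat) (s t : vtx) (p : seq vtx) : bool :=
  [&& hamseqb 1 m p, endsb s t p, sweeps_col m p & (1 < s.1) ==> (1 < t.1) ==> vedge 1 p].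

Lemma sweeping_of_search m :
  all (fun s => all (fun t => (s == t) ||
    sweeping_pathb m s t (find_ham (sweeping_pathb m s t) 1 m s)) (strip_enum 1 m.-1))
    (strip_enum 1 m.-1) ->
  sweeping m.
Proof.
move=> /allP checked s t; rewrite -!mem_strip_enum => hs ht /negbTE st.
move: (allP (checked s hs) t ht); rewrite st => /and4P [h e sw v1].
exists (find_ham (sweeping_pathb m s t) 1 m s); split.
- exact: hamseqbP.
- exact: endsbP.
- exact: sw.
- by move=> s1 t1; rewrite s1 t1 in v1.
Qed.

Lemma sweeping3 : sweeping 3.
Proof. by apply: sweeping_of_search; vm_compute. Qed.

Lemma sweeping4 : sweeping 4.
Proof. by apply: sweeping_of_search; vm_compute. Qed.

Definition prefixb (s : vtx) (p : seq vtx) : bool :=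
  [&& hamseqb 1 2 p, endsb s (last s p) p, sg_adj (last s p) (3, 2) & vedge 1 p].

Lemma strip12_prefix s : strip 1 2 s -> exists p e,
  [/\ hamseq (strip 1 2) p, ends s e p, sg_adj e (3, 2) & vedge 1 p].
Proof.
have : all (fun s => prefixb s (find_ham (prefixb s) 1 2 s)) (strip_enum 1 2) by vm_compute.
move/allP=> checked; rewrite -mem_strip_enum => /checked /and4P [h e adj v1].
by do 2 eexists; split; [exact: hamseqbP h | exact: endsbP e | exact: adj | exact: v1].
Qed.

Lemma sweeping_join m s t p : strip 1 2 s ->
  sweeping_path m (1, 2) t p -> exists p', sweeping_path (2 + m) s (shift 2 t) p'.
Proof.
move=> s12 [ham st sw _].
have [pre [e [hpre se e32 v1]]] := strip12_prefix s12.
have st' := ends_map (shift 2) st.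
exists (pre ++ map (shift 2) p); split.
- apply: (hamseq_cat _ _ hpre se (hamseq_shift 2 ham) st' e32) => v; rewrite /strip; lia.
- exact: ends_cat se st'.
- by case/orP: (sweeps_col_shift 2 sw) => sw'; apply/orP; [left | right]; apply: infix_catl.
- by move=> _ _; case/hasP: v1 => yy yy_in e1; apply/hasP; exists yy; last exact: infix_catr.
Qed.

Lemma sweeping_step m : 3 <= m -> sweeping m -> sweeping m.+1 -> sweeping m.+2.
Proof.
move=> m3 P0 P1.
suff sweep_le s t : strip 1 m.+1 s -> strip 1 m.+1 t -> s != t -> s.1 <= t.1 ->
    exists p, sweeping_path m.+2 s t p.
  move=> s t hs ht st; case: (leqP s.1 t.1) => [|/ltnW] le; first exact: sweep_le.
  rewrite eq_sym in st.
  by have [p /sweeping_path_rev] := sweep_le t s ht hs st le; exists (rev p).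
case: s t => [s1 s2] [t1 t2]; rewrite /strip xpair_eqE /= => hs ht st le.
case: (ltnP t1 m.+1) => [t_lt | t_ge].
  have [p sp] : exists p, sweeping_path m.+1 (s1, s2) (t1, t2) p.
    by apply: P1; rewrite /strip ?xpair_eqE /=; lia.
  by apply: (sweeping_extend_right _ sp); lia.
case: (ltnP 2 s1) => [s_gt | s_le].
  have [p sp] : exists p, sweeping_path m.+1 (s1.-1, s2) (t1.-1, t2) p.
    by apply: P1; rewrite /strip ?xpair_eqE /=; lia.
  have -> : (s1, s2) = shift 1 (s1.-1, s2) by rewrite /shift /=; congr pair; lia.
  have -> : (t1, t2) = shift 1 (t1.-1, t2) by rewrite /shift /=; congr pair; lia.
  by apply: (sweeping_extend_left _ _ _ sp) => /=; lia.
have [p sp] : exists p, sweeping_path m (1, 2) (t1 - 2, t2) p.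
  by apply: P0; rewrite /strip ?xpair_eqE /=; lia.
have -> : (t1, t2) = shift 2 (t1 - 2, t2) by rewrite /shift /=; congr pair; lia.
by apply: (sweeping_join _ sp); rewrite /strip /=; lia.
Qed.

Lemma sweeping_ge3 m : 3 <= m -> sweeping m.
Proof.
have two_steps k : sweeping k.+3 /\ sweeping k.+4.
  elim: k => [|k [Pk Pk1]]; first by split; [exact: sweeping3 | exact: sweeping4].
  by split; last exact: sweeping_step.
by move=> m3; have [] := two_steps (m - 3); rewrite -addn3 subnK.
Qed.

Lemma ham_path_of V s t p : hamseq V p -> ends s t p -> ham_path V s t p.
Proof.
case=> u sp c [q def_p lq]; exists q; split=> //; split=> //.
- by apply/allP => v; rewrite -c.
- by move=> v Vv; rewrite -c.
- by rewrite def_p in sp.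
Qed.

Lemma infix_path_has_edge p u v : infix [:: u; v] p || infix [:: v; u] p -> path_has_edge p u v.
Proof.
case/orP=> /infixP [l [r ->]]; exists (size l).
all: rewrite size_cat /= !nth_cat ltnn subnn [_.+1 < size l]ltnNge leqnSn subSnn /=.
all: split; [by rewrite !addnS !ltnS leq_addr | by [left | right]].
Qed.

Lemma sweeps_col_edges m p : sweeps_col m p ->
  path_has_edge p (m, 1) (m, 2) /\ path_has_edge p (m, 2) (m, 3).
Proof.
case/orP=> sw; split; apply: infix_path_has_edge; apply/orP.
- by left; apply: infix_trans sw; apply: (prefix_infix _ [:: (m, 3)]).
- by left; apply: infix_trans sw; apply: (suffix_infix [:: (m, 1)]).
- by right; apply: infix_trans sw; apply: (suffix_infix [:: (m, 3)]).
- by right; apply: infix_trans sw; apply: (prefix_infix _ [:: (m, 1)]).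
Qed.

Theorem lemma6 (m : nat) (s t : nat * nat) :
  3 <= m ->
  in_rect m 3 s -> in_rect m 3 t -> s <> t ->
  s \notin [:: (m, 1); (m, 2); (m, 3)] ->
  t \notin [:: (m, 1); (m, 2); (m, 3)] ->
  exists p : seq (nat * nat),
    ham_path (in_rect m 3) s t p /\
    path_has_edge p (m, 1) (m, 2) /\ path_has_edge p (m, 2) (m, 3).
Proof.
move=> m3 hs ht /eqP st s_off t_off.
have off_last v : in_rect m 3 v -> v \notin col m -> strip 1 m.-1 v.
  by case: v => a b; rewrite /in_rect /strip !inE !xpair_eqE /=; lia.
have [p [ham ends_st sw _]] := sweeping_ge3 m3 (off_last s hs s_off) (off_last t ht t_off) st.
by exists p; split; [exact: ham_path_of ham ends_st | exact: sweeps_col_edges].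
Qed.
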